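(* $SN_{d\beta}=ISN_{d\beta}$, i.e. a term $t\in\mathtt T_J$ is strongly normalizing for $\to_{d\beta}$ if and only if $t\in ISN_{d\beta}$.
   Context: Terms $\mathtt T_J$: $t,u,r ::= x \mid \lambda x.t \mid t(u,y.r)$ ($y$ bound in $r$), up to $\alpha$-equivalence; $\{u/x\}t$ capture-avoiding substitution. List contexts $\mathtt D ::= \Diamond \mid t(u,y.\mathtt D)$. Distant beta: $\mathtt D\langle\lambda x.t\rangle(u,y.r) \mapsto_{d\beta} \{\{u/x\}\mathtt D\langle t\rangle/y\}r$ (variables bound by $\mathtt D$ not free in $u$, $x$ not in $\mathtt D$), $\to_{d\beta}$ its closure under all contexts; $SN_{d\beta}$ is the set of terms with no infinite $\to_{d\beta}$-sequence. Neutral terms $\mathtt n ::= x \mid \mathtt n(u,y.\mathtt n)$; answers $\mathtt a ::= \lambda x.t \mid \mathtt n(u,y.\mathtt a)$; neutral list contexts $\mathtt D_n ::= \Diamond \mid \mathtt n(u,y.\mathtt D_n)$; weak-head contexts $\mathtt W ::= \Diamond \mid \mathtt W(u,y.r) \mid \mathtt n(u,y.\mathtt W)$. $ISN_{d\beta}$ is the smallest set of terms closed under the rules: (snvar) $x\in ISN_{d\beta}$; (snabs) if $t\in ISN_{d\beta}$ then $\lambda x.t\in ISN_{d\beta}$; (snapp) if $\mathtt n,u,r\in ISN_{d\beta}$ with $\mathtt n$ neutral and $r\in\mathtt n\cup\mathtt a$, then $\mathtt n(u,y.r)\in ISN_{d\beta}$; (snbeta) if $\mathtt W\langle\{\{u/x\}\mathtt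 D_n\langle s\rangle/y\}r\rangle\in ISN_{d\beta}$, $\mathtt D_n\langle s\rangle\in ISN_{d\beta}$ and $u\in ISN_{d\beta}$, then $\mathtt W\langle\mathtt D_n\langle\lambda x.s\rangle(u,y.r)\rangle\in ISN_{d\beta}$. *)

(* Terms of the lambda-calculus with generalized applications
   (Lambda J), represented with de Bruijn indices so that terms are
   identified up to alpha-equivalence. *)
From Stdlib Require Import Arith List.

Inductive term : Type :=
| Var : nat -> term
| Lam : term -> term
| App : term -> term -> term -> term. (* t(u, y.r) : binds index 0 in r *)

Fixpoint shift (d c : nat) (t : term) : term :=
  match t with
  | Var n => if Nat.ltb n c then Var n else Var (n + d)
  | Lam b => Lam (shift d (S c) b)
  | App t1 u r => App (shift d c t1) (shift d c u) (shift d (S c) r)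
  end.

(* subst j s t : capture-avoiding substitution of s (living outside the j
   enclosing binders) for index j in t; indices above j are decremented. *)
Fixpoint subst (j : nat) (s : term) (t : term) : term :=
  match t with
  | Var n => if Nat.ltb n j then Var n
             else if Nat.eqb n j then shift j 0 s else Var (n - 1)
  | Lam b => Lam (subst (S j) s b)
  | App t1 u r => App (subst j s t1) (subst j s u) (subst (S j) s r)
  end.

(* List contexts D ::= Hole | t(u, y.D)   (the hole is under the y binder) *)
Inductive lctx : Type :=
| LHole : lctx
| LApp : term -> term -> lctx -> lctx.

Fixpoint lplug (D : lctx) (s : term) : term :=
  match D with
  | LHole => s
  | LApp t u D' => App t u (lplug D' s)
  end.

Fixpoint ldepth (D : lctx) : nat :=
  match D with LHole => 0 | LApp _ _ D' => S (ldepth D') end.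

Fixpoint lshift (d c : nat) (D : lctx) : lctx :=
  match D with
  | LHole => LHole
  | LApp t u D' => LApp (shift d c t) (shift d c u) (lshift d (S c) D')
  end.

(* {u/x} D<t>  where x is index 0 of t (bound by the removed lambda),
   t lives under the binders of D, and u must not be captured by D. *)
Definition dsubst (D : lctx) (t u : term) : term :=
  lplug D (subst 0 (shift (ldepth D) 0 u) t).

(* D<t> where x (index 0 of t, the variable of the removed lambda) becomes
   a fresh free variable (the new outermost free index 0). *)
Definition dopen (D : lctx) (t : term) : term :=
  lplug (lshift 1 0 D) (subst 0 (Var (ldepth D)) (shift 1 (S (ldepth D)) t)).

Inductive step : term -> term -> Prop :=
| step_dbeta : forall D t u r,
    step (App (lplug D (Lam t)) u r) (subst 0 (dsubst D t u) r)
| step_lam : forall t t', step t t' -> step (Lam t) (Lam t')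
| step_app1 : forall t t' u r, step t t' -> step (App t u r) (App t' u r)
| step_app2 : forall t u u' r, step u u' -> step (App t u r) (App t u' r)
| step_app3 : forall t u r r', step r r' -> step (App t u r) (App t u r').

Definition SN (t : term) : Prop :=
  ~ (exists f : nat -> term, f 0 = t /\ forall n, step (f n) (f (S n))).

Inductive neutral : term -> Prop :=
| ne_var : forall x, neutral (Var x)
| ne_app : forall n u n', neutral n -> neutral n' -> neutral (App n u n').

Inductive answer : term -> Prop :=
| ans_lam : forall t, answer (Lam t)
| ans_app : forall n u a, neutral n -> answer a -> answer (App n u a).

Inductive neutral_lctx : lctx -> Prop :=
| nl_hole : neutral_lctx LHole
| nl_app : forall n u D, neutral n -> neutral_lctx D -> neutral_lctx (LApp n u D).

Inductive wctx : Type :=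
| WHole : wctx
| WLeft : wctx -> term -> term -> wctx
| WRight : term -> term -> wctx -> wctx.

Fixpoint wplug (W : wctx) (s : term) : term :=
  match W with
  | WHole => s
  | WLeft W' u r => App (wplug W' s) u r
  | WRight n u W' => App n u (wplug W' s)
  end.

Inductive weak_head : wctx -> Prop :=
| wh_hole : weak_head WHole
| wh_left : forall W u r, weak_head W -> weak_head (WLeft W u r)
| wh_right : forall n u W, neutral n -> weak_head W -> weak_head (WRight n u W).

Inductive ISN : term -> Prop :=
| snvar : forall x, ISN (Var x)
| snabs : forall t, ISN t -> ISN (Lam t)
| snapp : forall n u r, neutral n -> ISN n -> ISN u -> ISN r ->
    (neutral r \/ answer r) -> ISN (App n u r)
| snbeta : forall W D s u r, weak_head W -> neutral_lctx D ->
    ISN (wplug W (subst 0 (dsubst D s u) r)) ->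
    ISN (dopen D s) ->
    ISN u ->
    ISN (wplug W (App (lplug D (Lam s)) u r)).

(* Only rule (snbeta) needs work.  No redex straddles the
   hole of a neutral list context, so [dopen D s] reduces exactly like [D<\x.s>], which
   is therefore SN.  The redex [D<\x.s>(u, y.r)] in weak-head position can still be
   duplicated (an answer on its right turns an enclosing application into a distant
   beta-redex that copies it), so instead of a head-expansion argument the term is
   related to its contractum by [pdev], which contracts any number of such redexes and
   is weighted by the reduction bounds of their heads and arguments: every step of the
   term is matched by steps of the contractum, or by the same contractum with a smaller
   weight.

   Reduction is finitely branching, so an SN term has a longest
   reduction; induction on its length and on the size of the term, which is neutral, an
   answer, or of the form W<D_n<\x.s>(u, y.r)>, yields the rules of ISN. *)

From Stdlib Require Import Arith Lia List Relations Wellfounded Classical ClassicalEpsilon.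

(** * Renamings and parallel substitutions *)

Definition up_ren (r : nat -> nat) : nat -> nat :=
  fun n => match n with 0 => 0 | S m => S (r m) end.

Fixpoint ren (r : nat -> nat) (t : term) : term :=
  match t with
  | Var n => Var (r n)
  | Lam b => Lam (ren (up_ren r) b)
  | App t u v => App (ren r t) (ren r u) (ren (up_ren r) v)
  end.

Definition up (s : nat -> term) : nat -> term :=
  fun n => match n with 0 => Var 0 | S m => ren S (s m) end.

Fixpoint inst (s : nat -> term) (t : term) : term :=
  match t with
  | Var n => s n
  | Lam b => Lam (inst (up s) b)
  | App t u v => App (inst s t) (inst s u) (inst (up s) v)
  end.

Definition scons {A : Type} (x : A) (f : nat -> A) : nat -> A :=
  fun n => match n with 0 => x | S m => f m end.

Lemma ren_ext t r r' : (forall n, r n = r' n) -> ren r t = ren r' t.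
Proof.
  revert r r'; induction t; intros r r' H; simpl; f_equal; auto;
    [apply IHt | apply IHt3]; intros [|n]; simpl; auto.
Qed.

Lemma inst_ext t s s' : (forall n, s n = s' n) -> inst s t = inst s' t.
Proof.
  revert s s'; induction t; intros s s' H; simpl; f_equal; auto;
    [apply IHt | apply IHt3]; intros [|n]; simpl; rewrite ?H; auto.
Qed.

Lemma ren_ren t r r' : ren r (ren r' t) = ren (fun n => r (r' n)) t.
Proof.
  revert r r'; induction t; intros r r'; simpl; f_equal; auto;
    [rewrite IHt | rewrite IHt3]; apply ren_ext; intros [|n]; reflexivity.
Qed.

Lemma ren_as_inst t r : ren r t = inst (fun n => Var (r n)) t.
Proof.
  revert r; induction t; intros r; simpl; f_equal; auto;
    [rewrite IHt | rewrite IHt3]; apply inst_ext; intros [|n]; reflexivity.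
Qed.

Lemma inst_ren t s r : inst s (ren r t) = inst (fun n => s (r n)) t.
Proof.
  revert s r; induction t; intros s r; simpl; f_equal; auto;
    [rewrite IHt | rewrite IHt3]; apply inst_ext; intros [|n]; reflexivity.
Qed.

Lemma ren_inst t s r : ren r (inst s t) = inst (fun n => ren r (s n)) t.
Proof.
  revert s r; induction t; intros s r; simpl; f_equal; auto;
    [rewrite IHt | rewrite IHt3]; apply inst_ext; intros [|n]; simpl; auto;
    rewrite !ren_ren; reflexivity.
Qed.

Lemma inst_inst t s s' : inst s (inst s' t) = inst (fun n => inst s (s' n)) t.
Proof.
  revert s s'; induction t; intros s s'; simpl; f_equal; auto;
    [rewrite IHt | rewrite IHt3]; apply inst_ext; intros [|n]; simpl; auto;
    rewrite inst_ren, ren_inst; reflexivity.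
Qed.

Lemma inst_var t : inst Var t = t.
Proof.
  induction t; simpl; f_equal; auto;
    [rewrite <- IHt at 2 | rewrite <- IHt3 at 2]; apply inst_ext; intros [|n]; reflexivity.
Qed.

Lemma ren_id t : ren (fun n => n) t = t.
Proof. rewrite ren_as_inst; apply inst_var. Qed.

Lemma inst_scons_ren_S x s t : inst (scons x s) (ren S t) = inst s t.
Proof. rewrite inst_ren; reflexivity. Qed.

Definition shift_var (d c n : nat) : nat := if n <? c then n else n + d.

Definition subst_var (j : nat) (s : term) (n : nat) : term :=
  if n <? j then Var n else if n =? j then shift j 0 s else Var (n - 1).

Ltac nat_cases :=
  unfold shift_var, subst_var, up_ren, scons in *; simpl;
  repeat match goal with
         | |- context [?a <? ?b] => destruct (Nat.ltb_spec a b)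
         | |- context [?a =? ?b] => destruct (Nat.eqb_spec a b)
         | |- context [?a <=? ?b] => destruct (Nat.leb_spec a b)
         end; simpl; try reflexivity; try (f_equal; lia); try lia.

Lemma shift_as_ren t d c : shift d c t = ren (shift_var d c) t.
Proof.
  revert c; induction t; intros c; simpl; [nat_cases | ..]; f_equal; auto;
    [rewrite IHt | rewrite IHt3]; apply ren_ext; intros [|n]; nat_cases.
Qed.

Lemma shift1_as_ren t : shift 1 0 t = ren S t.
Proof. rewrite shift_as_ren; apply ren_ext; intros; nat_cases. Qed.

Lemma shift_0 t c : shift 0 c t = t.
Proof.
  rewrite shift_as_ren; transitivity (ren (fun n => n) t); [|apply ren_id].
  apply ren_ext; intros; nat_cases.
Qed.

Lemma shift_shift1 t d : shift d 0 (shift 1 0 t) = shift (S d) 0 t.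
Proof. rewrite !shift_as_ren, ren_ren; apply ren_ext; intros; nat_cases. Qed.

Lemma subst_as_inst t j s : subst j s t = inst (subst_var j s) t.
Proof.
  revert j; induction t; intros j; simpl; auto; f_equal; auto;
    [rewrite IHt | rewrite IHt3]; apply inst_ext; intros [|n]; unfold up; nat_cases;
    rewrite !shift_as_ren, ren_ren; apply ren_ext; intros; nat_cases.
Qed.

Lemma subst0_as_inst t v : subst 0 v t = inst (scons v Var) t.
Proof.
  rewrite subst_as_inst; apply inst_ext; intros [|n]; nat_cases; apply shift_0.
Qed.

Fixpoint up_ren_n (d : nat) (r : nat -> nat) : nat -> nat :=
  match d with 0 => r | S d => up_ren (up_ren_n d r) end.

Fixpoint up_n (d : nat) (s : nat -> term) : nat -> term :=
  match d with 0 => s | S d => up (up_n d s) end.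

Fixpoint lren (r : nat -> nat) (D : lctx) : lctx :=
  match D with
  | LHole => LHole
  | LApp t u D' => LApp (ren r t) (ren r u) (lren (up_ren r) D')
  end.

Fixpoint linst (s : nat -> term) (D : lctx) : lctx :=
  match D with
  | LHole => LHole
  | LApp t u D' => LApp (inst s t) (inst s u) (linst (up s) D')
  end.

Lemma up_ren_n_S d r : up_ren_n d (up_ren r) = up_ren_n (S d) r.
Proof. induction d; simpl; rewrite ?IHd; reflexivity. Qed.

Lemma up_n_S d s : up_n d (up s) = up_n (S d) s.
Proof. induction d; simpl; rewrite ?IHd; reflexivity. Qed.

Lemma ldepth_linst D s : ldepth (linst s D) = ldepth D.
Proof. revert s; induction D; simpl; auto. Qed.

Lemma ren_lplug D r t : ren r (lplug D t) = lplug (lren r D) (ren (up_ren_n (ldepth D) r) t).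
Proof. revert r; induction D; intros r; simpl; rewrite ?IHD, ?up_ren_n_S; reflexivity. Qed.

Lemma inst_lplug D s t : inst s (lplug D t) = lplug (linst s D) (inst (up_n (ldepth D) s) t).
Proof. revert s; induction D; intros s; simpl; rewrite ?IHD, ?up_n_S; reflexivity. Qed.

Lemma lren_ext D r r' : (forall n, r n = r' n) -> lren r D = lren r' D.
Proof.
  revert r r'; induction D; intros r r' H; simpl; f_equal; auto using ren_ext.
  apply IHD; intros [|n]; simpl; auto.
Qed.

Lemma linst_ext D s s' : (forall n, s n = s' n) -> linst s D = linst s' D.
Proof.
  revert s s'; induction D; intros s s' H; simpl; f_equal; auto using inst_ext.
  apply IHD; intros [|n]; simpl; rewrite ?H; auto.
Qed.

Lemma lren_as_linst D r : lren r D = linst (fun n => Var (r n)) D.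
Proof.
  revert r; induction D; intros r; simpl; rewrite ?ren_as_inst, ?IHD; auto.
  f_equal; apply linst_ext; intros [|n]; reflexivity.
Qed.

Lemma up_n_var d r n : up_n d (fun k => Var (r k)) n = Var (up_ren_n d r n).
Proof. revert n; induction d; intros [|n]; simpl; rewrite ?IHd; auto. Qed.

Lemma lshift_as_lren D d c : lshift d c D = lren (shift_var d c) D.
Proof.
  revert c; induction D; intros c; simpl; rewrite ?shift_as_ren, ?IHD; auto.
  f_equal; apply lren_ext; intros [|n]; nat_cases.
Qed.

Lemma up_n_plus d s n : up_n d s (n + d) = ren (fun k => k + d) (s n).
Proof.
  induction d; simpl.
  - rewrite Nat.add_0_r, <- (ren_id (s n)) at 1; apply ren_ext; intros; lia.
  - rewrite Nat.add_succ_r; simpl; rewrite IHd, ren_ren; apply ren_ext; intros; lia.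
Qed.

Lemma inst_shift d s u : inst (up_n d s) (shift d 0 u) = shift d 0 (inst s u).
Proof.
  rewrite !shift_as_ren, inst_ren, ren_inst; apply inst_ext; intros n.
  unfold shift_var; simpl; rewrite up_n_plus; apply ren_ext; intros; nat_cases.
Qed.

Lemma inst_subst0 s v t : inst s (subst 0 v t) = subst 0 (inst s v) (inst (up s) t).
Proof.
  rewrite !subst0_as_inst, !inst_inst; apply inst_ext; intros [|n]; simpl; auto.
  rewrite inst_scons_ren_S, inst_var; reflexivity.
Qed.

Lemma ren_subst0 r v t : ren r (subst 0 v t) = subst 0 (ren r v) (ren (up_ren r) t).
Proof.
  rewrite !ren_as_inst, inst_subst0; f_equal; apply inst_ext; intros [|n]; reflexivity.
Qed.

Lemma inst_dsubst s D p u :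
  inst s (dsubst D p u) = dsubst (linst s D) (inst (up_n (S (ldepth D)) s) p) (inst s u).
Proof.
  unfold dsubst; rewrite inst_lplug, inst_subst0, inst_shift, ldepth_linst; reflexivity.
Qed.

Lemma ren_dsubst r D p u :
  ren r (dsubst D p u) = dsubst (lren r D) (ren (up_ren_n (S (ldepth D)) r) p) (ren r u).
Proof.
  rewrite !ren_as_inst, inst_dsubst, lren_as_linst; f_equal.
  apply inst_ext; intros; apply up_n_var.
Qed.

Lemma dsubst_LApp t v D p u : dsubst (LApp t v D) p u = App t v (dsubst D p (shift 1 0 u)).
Proof. unfold dsubst; simpl; rewrite shift_shift1; reflexivity. Qed.

(** * Reduction under renaming and in list contexts *)

Lemma step_inst t t' s : step t t' -> step (inst s t) (inst s t').
Proof.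
  intros H; revert s; induction H; intros s; simpl; try (constructor; auto; fail).
  rewrite inst_lplug, inst_subst0, inst_dsubst; apply step_dbeta.
Qed.

Lemma step_ren t t' r : step t t' -> step (ren r t) (ren r t').
Proof. rewrite !ren_as_inst; apply step_inst. Qed.

Lemma ren_eq_answer r t D p : ren r t = lplug D (Lam p) ->
  exists D0 p0, t = lplug D0 (Lam p0) /\ D = lren r D0 /\
                p = ren (up_ren_n (S (ldepth D0)) r) p0.
Proof.
  revert t r; induction D; intros [] r H; simpl in H; try discriminate.
  - injection H as <-; exists LHole, t; auto.
  - injection H as <- <- E; destruct (IHD _ _ E) as (D0 & p0 & -> & -> & ->).
    exists (LApp t1 t2 D0), p0; simpl; rewrite up_ren_n_S; auto.
Qed.

Lemma step_ren_inv r t v : step (ren r t) v -> exists t', step t t' /\ v = ren r t'.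
Proof.
  revert r v; induction t as [n | t IH | t1 IH1 t2 IH2 t3 IH3]; intros r v H; simpl in H.
  - inversion H.
  - inversion H as [| a a' Ha | | |]; subst.
    destruct (IH _ _ Ha) as (w & Hw & ->); exists (Lam w); split; [constructor|]; auto.
  - inversion H as [D p ? ? E | | a a' ? ? Ha | ? a a' ? Ha | ? ? a a' Ha]; subst.
    + destruct (ren_eq_answer _ _ _ _ (eq_sym E)) as (D0 & p0 & -> & -> & ->).
      exists (subst 0 (dsubst D0 p0 t2) t3); split; [apply step_dbeta|].
      rewrite ren_subst0, ren_dsubst; reflexivity.
    + destruct (IH1 _ _ Ha) as (w & Hw & ->).
      exists (App w t2 t3); split; [constructor|]; auto.
    + destruct (IH2 _ _ Ha) as (w & Hw & ->).
      exists (App t1 w t3); split; [constructor|]; auto.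
    + destruct (IH3 _ _ Ha) as (w & Hw & ->).
      exists (App t1 t2 w); split; [constructor|]; auto.
Qed.

Lemma step_lplug D t t' : step t t' -> step (lplug D t) (lplug D t').
Proof. induction D; simpl; auto using step. Qed.

Lemma step_wplug W t t' : step t t' -> step (wplug W t) (wplug W t').
Proof. induction W; simpl; auto using step. Qed.

Lemma lplug_Lam_inj D1 D2 p1 p2 :
  lplug D1 (Lam p1) = lplug D2 (Lam p2) -> D1 = D2 /\ p1 = p2.
Proof.
  revert D2; induction D1; intros [] H; simpl in H; try discriminate.
  - injection H as ->; auto.
  - injection H as -> -> E; destruct (IHD1 _ E) as [-> ->]; auto.
Qed.

Lemma neutral_not_answer D p : ~ neutral (lplug D (Lam p)).
Proof. induction D; simpl; intros H; inversion H; auto. Qed.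

Lemma neutral_step n n' : neutral n -> step n n' -> neutral n'.
Proof.
  intros Hn; revert n'; induction Hn; intros m Hs; inversion Hs; subst;
    try (constructor; auto; fail).
  exfalso; eapply neutral_not_answer; eauto.
Qed.

Lemma neutral_ren r n : neutral n -> neutral (ren r n).
Proof. intros H; revert r; induction H; simpl; constructor; auto. Qed.

Lemma neutral_lctx_lren r D : neutral_lctx D -> neutral_lctx (lren r D).
Proof. intros H; revert r; induction H; simpl; constructor; auto using neutral_ren. Qed.

Inductive lstep : lctx -> lctx -> Prop :=
| lstep_fun t t' u D : step t t' -> lstep (LApp t u D) (LApp t' u D)
| lstep_arg t u u' D : step u u' -> lstep (LApp t u D) (LApp t u' D)
| lstep_body t u D D' : lstep D D' -> lstep (LApp t u D) (LApp t u D').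

Lemma step_lplug_lstep D D' t : lstep D D' -> step (lplug D t) (lplug D' t).
Proof. induction 1; simpl; constructor; auto. Qed.

Lemma neutral_lctx_lstep D D' : neutral_lctx D -> lstep D D' -> neutral_lctx D'.
Proof.
  intros HD H; revert HD; induction H; intros HD; inversion HD; subst;
    constructor; eauto using neutral_step.
Qed.

Lemma ldepth_lstep D D' : lstep D D' -> ldepth D' = ldepth D.
Proof. induction 1; simpl; auto. Qed.

Lemma lstep_lren r D D' : lstep D D' -> lstep (lren r D) (lren r D').
Proof. intros H; revert r; induction H; intros r; simpl; constructor; auto using step_ren. Qed.

Lemma lstep_lren_inv r D E : lstep (lren r D) E -> exists D', lstep D D' /\ E = lren r D'.
Proof.
  revert r E; induction D as [|t u D IH]; intros r E H; simpl in H;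
    inversion H as [? a ? ? Ha | ? ? a ? Ha | ? ? ? F HF]; subst.
  - destruct (step_ren_inv _ _ _ Ha) as (w & Hw & ->).
    exists (LApp w u D); split; [constructor|]; auto.
  - destruct (step_ren_inv _ _ _ Ha) as (w & Hw & ->).
    exists (LApp t w D); split; [constructor|]; auto.
  - destruct (IH _ _ HF) as (F' & HF' & ->).
    exists (LApp t u F'); split; [constructor|]; auto.
Qed.

Lemma step_lplug_inv D t v : neutral_lctx D -> step (lplug D t) v ->
  (exists D', lstep D D' /\ v = lplug D' t) \/ (exists t', step t t' /\ v = lplug D t').
Proof.
  intros HD; revert v; induction HD as [|n u D Hn HD IH]; intros v H; simpl in H.
  - right; eauto.
  - inversion H as [| | ? a ? ? Ha | ? ? a ? Ha | ? ? ? a Ha]; subst.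
    + exfalso; eapply neutral_not_answer; eauto.
    + left; eexists; split; [apply lstep_fun; eauto | reflexivity].
    + left; eexists; split; [apply lstep_arg; eauto | reflexivity].
    + destruct (IH _ Ha) as [(D' & HD' & ->) | (t' & Ht & ->)].
      * left; eexists; split; [apply lstep_body; eauto | reflexivity].
      * right; eauto.
Qed.

(** * Strong normalisation and reduction bounds *)

Notation sn := (Acc (fun u t => step t u)).

Lemma sn_SN t : sn t -> SN t.
Proof.
  intros Hsn (f & <- & Hf).
  remember (f 0) as t eqn:Et; revert Et; generalize 0.
  induction Hsn as [t _ IH]; intros k ->; eapply IH; eauto.
Qed.

(* A term that is not [sn] has a reduct that is not [sn]; iterating this choice yields
   an infinite reduction. *)
Lemma SN_sn t : SN t -> sn t.
Proof.
  intros H; apply NNPP; intros Hnot; apply H.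
  assert (Hnext : forall x : {x | ~ sn x},
             {y : {y | ~ sn y} | step (proj1_sig x) (proj1_sig y)}).
  { intros [x Hx]; apply constructive_indefinite_description.
    apply NNPP; intros Hno; apply Hx; constructor; intros y Hy.
    apply NNPP; intros Hy'; apply Hno; exists (exist _ y Hy'); auto. }
  exists (fun n => proj1_sig (Nat.iter n (fun x => proj1_sig (Hnext x)) (exist _ t Hnot))).
  split; auto; intros n; simpl; apply (proj2_sig (Hnext _)).
Qed.

Lemma sn_clos_trans t : sn t -> Acc (fun u v => clos_trans term step v u) t.
Proof.
  intros H; apply Acc_clos_trans in H; revert H; apply Acc_incl.
  intros u v; apply clos_trans_transp_permute.
Qed.

Fixpoint bounded (n : nat) (t : term) : Prop :=
  match n with
  | 0 => forall t', ~ step t t'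
  | S m => forall t', step t t' -> bounded m t'
  end.

Lemma bounded_S n t : bounded n t -> bounded (S n) t.
Proof.
  revert t; induction n; intros t H t' Ht; simpl in *.
  - exfalso; eapply H; eauto.
  - apply IHn, H, Ht.
Qed.

Lemma bounded_le n m t : n <= m -> bounded n t -> bounded m t.
Proof. induction 1; auto using bounded_S. Qed.

Lemma bounded_step n t t' : bounded n t -> step t t' -> exists m, n = S m /\ bounded m t'.
Proof. destruct n; simpl; intros H Ht; [exfalso; eapply H|]; eauto. Qed.

Lemma bounded_ren n r t : bounded n t -> bounded n (ren r t).
Proof.
  revert t; induction n; intros t H v Hv; simpl in *;
    destruct (step_ren_inv _ _ _ Hv) as (t' & Ht & ->); eauto.
  eapply H; eauto.
Qed.

Section Compatible.

Variable f : term -> term.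
Hypothesis f_step : forall t u, step t u -> step (f t) (f u).

Lemma clos_trans_compat t u : clos_trans term step t u -> clos_trans term step (f t) (f u).
Proof. induction 1; eauto using clos_trans. Qed.

Lemma clos_refl_trans_compat t u :
  clos_refl_trans term step t u -> clos_refl_trans term step (f t) (f u).
Proof. induction 1; eauto using clos_refl_trans. Qed.

Lemma bounded_compat n t : bounded n (f t) -> bounded n t.
Proof.
  revert t; induction n; intros t H t' Ht; simpl in *; eauto.
  eapply H; eauto.
Qed.

End Compatible.

Lemma clos_refl_trans_eq_or_trans t u :
  clos_refl_trans term step t u -> t = u \/ clos_trans term step t u.
Proof.
  intros H; apply clos_rt_rt1n in H.
  induction H as [|v w u Hvw _ [<- | IH]]; auto; right; eauto using clos_trans.
Qed.

Lemma clos_refl_trans_inst t s s' :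
  (forall n, clos_refl_trans term step (s n) (s' n)) ->
  clos_refl_trans term step (inst s t) (inst s' t).
Proof.
  assert (Hup : forall s s', (forall n, clos_refl_trans term step (s n) (s' n)) ->
            forall n, clos_refl_trans term step (up s n) (up s' n)).
  { intros s1 s1' H [|n]; simpl; [apply rt_refl|].
    apply clos_refl_trans_compat; auto using step_ren. }
  revert s s'; induction t; intros s s' H; simpl; auto.
  - apply (clos_refl_trans_compat Lam); auto using step.
  - apply rt_trans with (App (inst s' t1) (inst s t2) (inst (up s) t3));
      [apply (clos_refl_trans_compat (fun x => App x _ _)); auto using step|].
    apply rt_trans with (App (inst s' t1) (inst s' t2) (inst (up s) t3));
      [apply (clos_refl_trans_compat (fun x => App _ x _)); auto using step|].
    apply (clos_refl_trans_compat (fun x => App _ _ x)); auto using step.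
Qed.

Lemma clos_refl_trans_subst0 t v v' : clos_refl_trans term step v v' ->
  clos_refl_trans term step (subst 0 v t) (subst 0 v' t).
Proof.
  intros H; rewrite !subst0_as_inst; apply clos_refl_trans_inst.
  intros [|n]; simpl; auto using rt_refl.
Qed.

Fixpoint answer_view (t : term) : option (lctx * term) :=
  match t with
  | Lam s => Some (LHole, s)
  | App t u v =>
      match answer_view v with Some (D, s) => Some (LApp t u D, s) | None => None end
  | Var _ => None
  end.

Lemma answer_view_lplug D s : answer_view (lplug D (Lam s)) = Some (D, s).
Proof. induction D; simpl; rewrite ?IHD; auto. Qed.

Lemma answer_view_Some t D s : answer_view t = Some (D, s) -> t = lplug D (Lam s).
Proof.
  revert D; induction t as [| |t1 _ t2 _ t3 IH]; intros D H; simpl in H; try discriminate.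
  - injection H as <- <-; auto.
  - destruct (answer_view t3) as [[D' s']|]; try discriminate.
    injection H as <- ->; simpl; rewrite (IH D'); auto.
Qed.

Fixpoint reducts (t : term) : list term :=
  match t with
  | Var _ => nil
  | Lam t => map Lam (reducts t)
  | App t u v =>
      map (fun x => App x u v) (reducts t) ++ map (fun x => App t x v) (reducts u) ++
      map (fun x => App t u x) (reducts v) ++
      match answer_view t with Some (D, s) => subst 0 (dsubst D s u) v :: nil | None => nil end
  end.

Lemma In_reducts t t' : In t' (reducts t) <-> step t t'.
Proof.
  split.
  - revert t'; induction t as [|t IH|t1 IH1 t2 IH2 t3 IH3]; intros t' H; simpl in H.
    + destruct H.
    + apply in_map_iff in H as (x & <- & Hx); auto using step.
    + rewrite !in_app_iff, !in_map_iff in H.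
      destruct H as [(x & <- & Hx) | [(x & <- & Hx) | [(x & <- & Hx) | H]]]; auto using step.
      destruct (answer_view t1) as [[D s]|] eqn:E; [|destruct H].
      destruct H as [<- | []]; rewrite (answer_view_Some _ _ _ E); apply step_dbeta.
  - induction 1; simpl; rewrite ?in_app_iff.
    + rewrite answer_view_lplug; simpl; auto.
    + apply in_map; auto.
    + left; apply (in_map (fun x => App x u r)); auto.
    + right; left; apply (in_map (fun x => App t x r)); auto.
    + right; right; left; apply (in_map (fun x => App t u x)); auto.
Qed.

Lemma bounded_list (L : list term) :
  (forall x, In x L -> exists n, bounded n x) -> exists N, forall x, In x L -> bounded N x.
Proof.
  induction L as [|a L IH]; intros H; [exists 0; intros x []|].
  destruct (H a) as [m Hm]; [left; auto|].
  destruct IH as [N HN]; [intros; apply H; right; auto|].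
  exists (max m N); intros x [<- | Hx].
  - apply bounded_le with m; auto; lia.
  - apply bounded_le with N; auto; lia.
Qed.

Lemma sn_bounded t : sn t -> exists n, bounded n t.
Proof.
  induction 1 as [t _ IH].
  destruct (bounded_list (reducts t)) as [N HN].
  { intros x Hx; apply IH, In_reducts, Hx. }
  exists (S N); intros t' Ht; apply HN, In_reducts, Ht.
Qed.

Definition open_var (d n : nat) : nat :=
  match n with 0 => d | S m => if m <? d then m else n end.

Lemma dopen_as_lplug D s : dopen D s = lplug (lren S D) (ren (open_var (ldepth D)) s).
Proof.
  unfold dopen; rewrite lshift_as_lren; f_equal.
  - apply lren_ext; intros; nat_cases.
  - rewrite subst_as_inst, shift_as_ren, inst_ren, ren_as_inst.
    apply inst_ext; intros [|n]; unfold open_var; nat_cases.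
Qed.

Lemma step_dopen_inv D s v : neutral_lctx D -> step (dopen D s) v ->
  exists D' s', v = dopen D' s' /\ neutral_lctx D' /\
                step (lplug D (Lam s)) (lplug D' (Lam s')).
Proof.
  intros HD H; rewrite dopen_as_lplug in H.
  destruct (step_lplug_inv _ _ _ (neutral_lctx_lren S _ HD) H)
    as [(E & HE & ->) | (t' & Ht & ->)].
  - destruct (lstep_lren_inv _ _ _ HE) as (D' & HD' & ->).
    exists D', s; repeat split; eauto using neutral_lctx_lstep, step_lplug_lstep.
    rewrite dopen_as_lplug, (ldepth_lstep _ _ HD'); reflexivity.
  - destruct (step_ren_inv _ _ _ Ht) as (s' & Hs & ->).
    exists D, s'; repeat split; auto using step_lplug, step.
    rewrite dopen_as_lplug; reflexivity.
Qed.

Lemma step_dopen D s v : neutral_lctx D -> step (lplug D (Lam s)) v ->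
  exists D' s', v = lplug D' (Lam s') /\ neutral_lctx D' /\ step (dopen D s) (dopen D' s').
Proof.
  intros HD H; destruct (step_lplug_inv _ _ _ HD H) as [(D' & HD' & ->) | (t' & Ht & ->)].
  - exists D', s; repeat split; eauto using neutral_lctx_lstep.
    rewrite !dopen_as_lplug, (ldepth_lstep _ _ HD').
    apply step_lplug_lstep, lstep_lren; auto.
  - inversion Ht as [| s1 s2 Hs | | |]; subst; exists D, s2; repeat split; auto.
    rewrite !dopen_as_lplug; apply step_lplug, step_ren, Hs.
Qed.

Lemma bounded_dopen n D s :
  neutral_lctx D -> bounded n (lplug D (Lam s)) -> bounded n (dopen D s).
Proof.
  revert D s; induction n; intros D s HD H v Hv; simpl in *;
    destruct (step_dopen_inv _ _ _ HD Hv) as (D' & s' & -> & HD' & Hs); eauto.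
  eapply H; eauto.
Qed.

Lemma sn_dopen D s : neutral_lctx D -> sn (dopen D s) -> sn (lplug D (Lam s)).
Proof.
  intros HD H; remember (dopen D s) as t eqn:Et; revert D s HD Et.
  induction H as [t _ IH]; intros D s HD ->; constructor; intros v Hv.
  destruct (step_dopen _ _ _ HD Hv) as (D' & s' & -> & HD' & Hs); eauto.
Qed.

(** * ISN terms are strongly normalising *)

Fixpoint fvs_in (I : nat -> bool) (t : term) : Prop :=
  match t with
  | Var n => I n = true
  | Lam t => fvs_in (scons true I) t
  | App t u v => fvs_in I t /\ fvs_in I u /\ fvs_in (scons true I) v
  end.

Lemma fvs_in_all I t : (forall n, I n = true) -> fvs_in I t.
Proof.
  revert I; induction t; intros I H; simpl; repeat split; auto;
    [apply IHt | apply IHt3]; intros [|n]; simpl; auto.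
Qed.

Lemma fvs_in_ren I J r t :
  (forall n, I n = true -> J (r n) = true) -> fvs_in I t -> fvs_in J (ren r t).
Proof.
  revert I J r; induction t; intros I J r HIJ H; simpl in *; auto.
  - eapply IHt; eauto; intros [|n]; simpl; auto.
  - destruct H as (Ht & Hu & Hv); repeat split; eauto.
    eapply IHt3; eauto; intros [|n]; simpl; auto.
Qed.

Lemma fvs_in_inst I J s t :
  (forall n, I n = true -> fvs_in J (s n)) -> fvs_in I t -> fvs_in J (inst s t).
Proof.
  assert (Hup : forall I0 J0 s0, (forall n, I0 n = true -> fvs_in J0 (s0 n)) ->
            forall n, scons true I0 n = true -> fvs_in (scons true J0) (up s0 n)).
  { intros I0 J0 s0 HIJ [|n]; simpl; auto.
    intros Hn; eapply fvs_in_ren; [|apply HIJ, Hn]; auto. }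
  revert I J s; induction t; intros I J s HIJ H; simpl in *; auto.
  - eapply IHt; eauto.
  - destruct H as (Ht & Hu & Hv); repeat split; eauto.
Qed.

Lemma inst_fvs_in_ren I s r t :
  (forall n, I n = true -> s n = Var (r n)) -> fvs_in I t -> inst s t = ren r t.
Proof.
  revert I s r; induction t; intros I s r Hs H; simpl in *; auto;
    [|destruct H as (Ht & Hu & Hv)]; f_equal; eauto;
    [eapply IHt | eapply IHt3]; eauto; intros [|n]; simpl; auto;
    intros Hn; rewrite Hs; auto.
Qed.

Lemma fvs_in_dsubst I D p u :
  fvs_in I (lplug D (Lam p)) -> fvs_in I u -> fvs_in I (dsubst D p u).
Proof.
  revert I u; induction D; intros I u H Hu.
  - unfold dsubst; simpl in *; rewrite shift_0, subst0_as_inst.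
    eapply fvs_in_inst; eauto; intros [|n]; simpl; auto.
  - rewrite dsubst_LApp; simpl in *; destruct H as (Ht & Hv & Hr); repeat split; auto.
    apply IHD; auto; rewrite shift1_as_ren; eapply fvs_in_ren; eauto.
Qed.

Lemma fvs_in_step I t t' : step t t' -> fvs_in I t -> fvs_in I t'.
Proof.
  intros H; revert I; induction H; intros I Ht; simpl in *; intuition eauto.
  rewrite subst0_as_inst; eapply fvs_in_inst; eauto.
  intros [|n]; simpl; auto using fvs_in_dsubst.
Qed.

Fixpoint neutral_in (I : nat -> bool) (t : term) : Prop :=
  match t with
  | Var n => I n = true
  | App t _ v => neutral_in I t /\ neutral_in (scons true I) v
  | Lam _ => False
  end.

Lemma neutral_in_neutral I t : neutral_in I t -> neutral t.
Proof.
  revert I; induction t; simpl; intros I H; try contradiction;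
    constructor; firstorder eauto.
Qed.

Lemma neutral_neutral_in I t : (forall n, I n = true) -> neutral t -> neutral_in I t.
Proof.
  intros HI H; revert I HI; induction H as [|n u n' _ IH1 _ IH2]; intros I HI; simpl; auto.
  split; auto; apply IH2; intros [|k]; simpl; auto.
Qed.

Lemma neutral_in_step I t t' : step t t' -> neutral_in I t -> neutral_in I t'.
Proof.
  intros H; revert I; induction H; intros I Ht; simpl in *; intuition eauto.
  exfalso; eapply neutral_not_answer, neutral_in_neutral; eauto.
Qed.

Lemma neutral_in_inst I J s t :
  (forall n, I n = true -> exists m, s n = Var m /\ J m = true) ->
  neutral_in I t -> neutral_in J (inst s t).
Proof.
  revert I J s; induction t; intros I J s Hs H; simpl in *; try contradiction.
  - destruct (Hs n H) as (m & -> & Hm); auto.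
  - destruct H; split; eauto.
    eapply IHt3; eauto; intros [|n]; simpl; [exists 0; auto|].
    intros Hn; destruct (Hs n Hn) as (m & -> & Hm); exists (S m); auto.
Qed.

(* [pdev I t t' w]: [t'] arises from [t] by contracting redexes [D<\x.s>(u, y.r)]
   with [D<\x.s>] and [u] bounded; [w] sums, over the contracted redexes, one plus
   these bounds.  The bounds survive reduction because [D<\x.s>] and [u] mention only
   variables frozen in [I], and a frozen variable is never substituted: it is free, or
   bound on the right of a neutral application with a frozen head. *)
Inductive pdev : (nat -> bool) -> term -> term -> nat -> Prop :=
| pdev_var I n : pdev I (Var n) (Var n) 0
| pdev_lam I t t' w : pdev (scons false I) t t' w -> pdev I (Lam t) (Lam t') w
| pdev_app I (frozen : bool) t t' u u' v v' w1 w2 w3 :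
    (frozen = true -> neutral_in I t) ->
    pdev I t t' w1 -> pdev I u u' w2 -> pdev (scons frozen I) v v' w3 ->
    pdev I (App t u v) (App t' u' v') (w1 + w2 + w3)
| pdev_contract I D s u r r' nF nu w :
    neutral_lctx D -> fvs_in I (lplug D (Lam s)) -> fvs_in I u ->
    bounded nF (lplug D (Lam s)) -> bounded nu u -> pdev (scons false I) r r' w ->
    pdev I (App (lplug D (Lam s)) u r) (subst 0 (dsubst D s u) r') (S (nF + nu + w)).

Lemma pdev_refl I t : pdev I t t 0.
Proof.
  revert I; induction t; intros I.
  - apply pdev_var.
  - apply pdev_lam; auto.
  - change 0 with (0 + 0 + 0); apply (pdev_app I false); auto; discriminate.
Qed.

Lemma pdev_contract_ren I J r D s u v v' nF nu w :
  (forall n, I n = true -> J (r n) = true) -> neutral_lctx D ->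
  fvs_in I (lplug D (Lam s)) -> fvs_in I u ->
  bounded nF (lplug D (Lam s)) -> bounded nu u -> pdev (scons false J) v v' w ->
  pdev J (App (ren r (lplug D (Lam s))) (ren r u) v) (subst 0 (ren r (dsubst D s u)) v')
       (S (nF + nu + w)).
Proof.
  intros HIJ HD HF Hu HnF Hnu Hv.
  apply (bounded_ren _ r) in HnF; apply (fvs_in_ren _ J r) in HF; auto.
  rewrite ren_lplug in *; rewrite ren_dsubst.
  apply pdev_contract; eauto using neutral_lctx_lren, bounded_ren, fvs_in_ren.
Qed.

Lemma pdev_ren I J r t t' w :
  (forall n, I n = true -> J (r n) = true) -> pdev I t t' w -> pdev J (ren r t) (ren r t') w.
Proof.
  intros HIJ H; revert J r HIJ.
  induction H as [I n | I t t' w _ IH | I b t t' u u' v v' w1 w2 w3 Hb _ IH1 _ IH2 _ IH3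
                  | I D s u v v' nF nu w HD HF Hu HnF Hnu _ IH]; intros J r HIJ; simpl.
  - apply pdev_var.
  - apply pdev_lam, IH; intros [|n]; simpl; auto.
  - apply (pdev_app J b); auto.
    + intros Hbt; rewrite ren_as_inst; eapply neutral_in_inst; eauto.
    + apply IH3; intros [|n]; simpl; auto.
  - rewrite ren_subst0; eapply pdev_contract_ren; eauto.
    apply IH; intros [|n]; simpl; auto.
Qed.

Lemma pdev_shift1 I b t t' w : pdev I t t' w -> pdev (scons b I) (shift 1 0 t) (shift 1 0 t') w.
Proof. rewrite !shift1_as_ren; apply pdev_ren; auto. Qed.

Definition pdev_subst (I J : nat -> bool) (s s' : nat -> term) (ws : nat -> nat) : Prop :=
  (forall n, I n = true -> exists m, s n = Var m /\ s' n = Var m /\ J m = true) /\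
  (forall n, I n = false -> pdev J (s n) (s' n) (ws n)).

Lemma pdev_subst_up b I J s s' ws :
  pdev_subst I J s s' ws -> pdev_subst (scons b I) (scons b J) (up s) (up s') (scons 0 ws).
Proof.
  intros [Hfrozen Hother]; split; intros [|n]; simpl; intros Hn.
  - exists 0; auto.
  - destruct (Hfrozen n Hn) as (m & -> & -> & Hm); exists (S m); auto.
  - apply pdev_var.
  - apply pdev_ren with J; auto.
Qed.

Lemma pdev_inst I J s s' ws t t' w : pdev I t t' w -> pdev_subst I J s s' ws ->
  exists w', pdev J (inst s t) (inst s' t') w' /\
             ((forall n, I n = false -> ws n = 0) -> w' = w).
Proof.
  intros H; revert J s s' ws.
  induction H as [I n | I t t' w _ IH | I b t t' u u' v v' w1 w2 w3 Hb _ IH1 _ IH2 _ IH3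
                  | I D p u v v' nF nu w HD HF Hu HnF Hnu _ IH]; intros J s s' ws Hs; simpl.
  - destruct (I n) eqn:E.
    + destruct (proj1 Hs n E) as (m & -> & -> & _); exists 0; split; auto; apply pdev_var.
    + exists (ws n); split; auto; apply (proj2 Hs); auto.
  - destruct (IH _ _ _ _ (pdev_subst_up false _ _ _ _ _ Hs)) as (w' & Hw' & Hz).
    exists w'; split; [apply pdev_lam; auto|].
    intros Z; apply Hz; intros [|n]; simpl; auto.
  - destruct (IH1 _ _ _ _ Hs) as (w1' & Hw1 & Hz1).
    destruct (IH2 _ _ _ _ Hs) as (w2' & Hw2 & Hz2).
    destruct (IH3 _ _ _ _ (pdev_subst_up b _ _ _ _ _ Hs)) as (w3' & Hw3 & Hz3).
    exists (w1' + w2' + w3'); split.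
    + apply (pdev_app J b); auto.
      intros Hbt; eapply neutral_in_inst; eauto.
      intros n Hn; destruct (proj1 Hs n Hn) as (m & ? & _ & ?); eauto.
    + intros Z; rewrite Hz1, Hz2, Hz3; auto; intros [|n]; simpl; auto.
  - destruct (IH _ _ _ _ (pdev_subst_up false _ _ _ _ _ Hs)) as (w' & Hw' & Hz).
    set (rho n := match s n with Var m => m | _ => 0 end).
    assert (Hrho : forall n, I n = true ->
                     s n = Var (rho n) /\ s' n = Var (rho n) /\ J (rho n) = true).
    { intros n Hn; destruct (proj1 Hs n Hn) as (m & E & E' & Hm).
      unfold rho; rewrite E, E'; auto. }
    rewrite inst_subst0, (inst_fvs_in_ren I s rho), (inst_fvs_in_ren I s rho u),
            (inst_fvs_in_ren I s' rho (dsubst D p u)); auto using fvs_in_dsubst;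
      try (intros n Hn; apply Hrho, Hn).
    exists (S (nF + nu + w')); split; [eapply pdev_contract_ren; eauto; apply Hrho|].
    intros Z; rewrite Hz; auto; intros [|n]; simpl; auto.
Qed.

Lemma pdev_subst0 I t t' w v v' wv :
  pdev (scons false I) t t' w -> pdev I v v' wv ->
  exists w', pdev I (subst 0 v t) (subst 0 v' t') w' /\ (wv = 0 -> w' = w).
Proof.
  intros Ht Hv; rewrite !subst0_as_inst.
  destruct (pdev_inst _ I (scons v Var) (scons v' Var) (scons wv (fun _ => 0)) _ _ _ Ht)
    as (w' & Hw' & Hz).
  - split; intros [|n]; simpl; intros Hn; try discriminate; auto.
    + exists n; auto.
    + apply pdev_var.
  - exists w'; split; auto; intros ->; apply Hz; intros [|n]; auto.
Qed.

Lemma pdev_answer I D p t' w : pdev I (lplug D (Lam p)) t' w ->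
  exists D' p', t' = lplug D' (Lam p') /\
    forall u u' wu, pdev I u u' wu -> exists w', pdev I (dsubst D p u) (dsubst D' p' u') w'.
Proof.
  revert I t' w; induction D as [|t u D IH]; intros I t' w H; simpl in H.
  - inversion H as [|? ? p' ? Hp| |]; subst; exists LHole, p'; split; auto.
    intros u u' wu Hu; unfold dsubst; simpl; rewrite !shift_0.
    destruct (pdev_subst0 _ _ _ _ _ _ _ Hp Hu) as (w' & Hw' & _); eauto.
  - inversion H as [| |I' b ? t1 ? u1 ? v1 w1 w2 w3 Hb Ht Hu Hv
                    |I' D0 s0 ? ? v1 nF nu w0 HD0 HF Hu0 HnF Hnu Hv]; subst.
    + destruct (IH _ _ _ Hv) as (D' & p' & -> & Hsub).
      exists (LApp t1 u1 D'), p'; split; auto.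
      intros a a' wa Ha; rewrite !dsubst_LApp.
      destruct (Hsub _ _ _ (pdev_shift1 _ b _ _ _ Ha)) as (w' & Hw').
      eexists; apply (pdev_app I b); eauto.
    + destruct (IH _ _ _ Hv) as (D' & p' & -> & Hsub).
      set (V := dsubst D0 s0 u).
      exists (linst (scons V Var) D'), (inst (up_n (S (ldepth D')) (scons V Var)) p').
      split; [rewrite subst0_as_inst, inst_lplug; reflexivity|].
      intros a a' wa Ha; rewrite dsubst_LApp.
      destruct (Hsub _ _ _ (pdev_shift1 _ false _ _ _ Ha)) as (w' & Hw').
      replace (dsubst _ _ a') with (subst 0 V (dsubst D' p' (shift 1 0 a'))).
      * eexists; apply pdev_contract; eauto.
      * rewrite subst0_as_inst, inst_dsubst, shift1_as_ren, inst_scons_ren_S, inst_var.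
        reflexivity.
Qed.

Lemma clos_refl_trans_dsubst D s u u' :
  step u u' -> clos_refl_trans term step (dsubst D s u) (dsubst D s u').
Proof.
  intros H; unfold dsubst; apply clos_refl_trans_compat; auto using step_lplug.
  apply clos_refl_trans_subst0, rt_step; rewrite !shift_as_ren; apply step_ren, H.
Qed.

Lemma step_answer D s v : neutral_lctx D -> step (lplug D (Lam s)) v ->
  exists D' s', v = lplug D' (Lam s') /\ neutral_lctx D' /\
                forall u, step (dsubst D s u) (dsubst D' s' u).
Proof.
  intros HD H; destruct (step_lplug_inv _ _ _ HD H) as [(D' & HD' & ->) | (t' & Ht & ->)].
  - exists D', s; repeat split; eauto using neutral_lctx_lstep.
    intros u; unfold dsubst; rewrite (ldepth_lstep _ _ HD'); apply step_lplug_lstep, HD'.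
  - inversion Ht as [| t1 t2 Hs | | |]; subst; exists D, t2; repeat split; auto.
    intros u; unfold dsubst; apply step_lplug; rewrite !subst0_as_inst; apply step_inst, Hs.
Qed.

Definition progress (t' : term) (w : nat) (t2' : term) (w2 : nat) : Prop :=
  clos_trans term step t' t2' \/ (t' = t2' /\ w2 < w).

Lemma progress_compat (f : term -> term) t' w t2' w2 W W2 :
  (forall a b, step a b -> step (f a) (f b)) -> (w2 < w -> W2 < W) ->
  progress t' w t2' w2 -> progress (f t') W (f t2') W2.
Proof.
  intros Hf Hw [H | [<- H]]; [left; apply clos_trans_compat | right]; auto.
Qed.

Lemma progress_clos_refl_trans t' w t2' w2 :
  clos_refl_trans term step t' t2' -> w2 < w -> progress t' w t2' w2.
Proof.
  intros H Hw; destruct (clos_refl_trans_eq_or_trans _ _ H) as [<- | Ht];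
    [right | left]; auto.
Qed.

Lemma pdev_dbeta I D p t' u u' v v' w1 w2 w3 :
  pdev I (lplug D (Lam p)) t' w1 -> pdev I u u' w2 -> pdev (scons false I) v v' w3 ->
  exists t2' w', pdev I (subst 0 (dsubst D p u) v) t2' w' /\ step (App t' u' v') t2'.
Proof.
  intros Ht Hu Hv; destruct (pdev_answer _ _ _ _ _ Ht) as (D' & p' & -> & Hsub).
  destruct (Hsub _ _ _ Hu) as (wv & Hwv).
  destruct (pdev_subst0 _ _ _ _ _ _ _ Hv Hwv) as (w' & Hw' & _).
  do 2 eexists; split; [eauto | apply step_dbeta].
Qed.

Lemma pdev_contract_progress I D D2 s s2 u u2 r r' nF nu nF2 nu2 w :
  neutral_lctx D2 -> fvs_in I (lplug D2 (Lam s2)) -> fvs_in I u2 ->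
  bounded nF2 (lplug D2 (Lam s2)) -> bounded nu2 u2 -> pdev (scons false I) r r' w ->
  nF2 + nu2 < nF + nu -> clos_refl_trans term step (dsubst D s u) (dsubst D2 s2 u2) ->
  exists t2' w2, pdev I (App (lplug D2 (Lam s2)) u2 r) t2' w2 /\
                 progress (subst 0 (dsubst D s u) r') (S (nF + nu + w)) t2' w2.
Proof.
  intros HD2 HF2 Hu2 HnF2 Hnu2 Hr Hlt Hred.
  exists (subst 0 (dsubst D2 s2 u2) r'), (S (nF2 + nu2 + w)); split.
  - apply pdev_contract; auto.
  - apply progress_clos_refl_trans; [apply clos_refl_trans_subst0, Hred | lia].
Qed.

Lemma pdev_step I t t' w t2 : pdev I t t' w -> step t t2 ->
  exists t2' w2, pdev I t2 t2' w2 /\ progress t' w t2' w2.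
Proof.
  intros H; revert t2.
  induction H as [I n | I t t' w _ IH | I b t t' u u' v v' w1 w2 w3 Hb Ht IH1 Hu IH2 Hv IH3
                  | I D s u r r' nF nu w HD HF Hu HnF Hnu Hr IH]; intros t2 Hs.
  - inversion Hs.
  - inversion Hs as [| a a2 Ha | | |]; subst.
    destruct (IH _ Ha) as (a2' & wa & Hpa & Hprog).
    exists (Lam a2'), wa; split; [apply pdev_lam; auto|].
    eapply progress_compat; eauto using step.
  - inversion Hs as [D0 p0 ? ? | | a a2 ? ? Ha | ? a a2 ? Ha | ? ? a a2 Ha]; subst.
    + destruct b; [exfalso; eapply neutral_not_answer, neutral_in_neutral, Hb; auto|].
      destruct (pdev_dbeta _ _ _ _ _ _ _ _ _ _ _ Ht Hu Hv) as (t2' & w' & H2 & Hstep).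
      exists t2', w'; split; [|left; apply t_step]; auto.
    + destruct (IH1 _ Ha) as (a2' & wa & Hpa & Hprog).
      exists (App a2' u' v'), (wa + w2 + w3); split.
      * apply (pdev_app I b); eauto using neutral_in_step.
      * apply (progress_compat (fun x => App x u' v') _ w1 _ wa); auto using step; lia.
    + destruct (IH2 _ Ha) as (a2' & wa & Hpa & Hprog).
      exists (App t' a2' v'), (w1 + wa + w3); split; [apply (pdev_app I b); auto|].
      apply (progress_compat (fun x => App t' x v') _ w2 _ wa); auto using step; lia.
    + destruct (IH3 _ Ha) as (a2' & wa & Hpa & Hprog).
      exists (App t' u' a2'), (w1 + w2 + wa); split; [apply (pdev_app I b); auto|].
      apply (progress_compat (fun x => App t' u' x) _ w3 _ wa); auto using step; lia.
  - inversion Hs as [D0 p0 ? ? E | | a a2 ? ? Ha | ? a a2 ? Ha | ? ? a a2 Ha]; subst.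
    + destruct (lplug_Lam_inj _ _ _ _ E) as [-> ->].
      destruct (pdev_subst0 _ _ _ _ _ _ _ Hr (pdev_refl I (dsubst D s u))) as (w' & Hw' & Hz).
      exists (subst 0 (dsubst D s u) r'), w'; split; auto.
      right; split; [reflexivity | rewrite Hz; auto; lia].
    + destruct (step_answer _ _ _ HD Ha) as (D2 & s2 & -> & HD2 & Hsub).
      destruct (bounded_step _ _ _ HnF Ha) as (k & -> & Hk).
      apply (pdev_contract_progress _ _ _ _ _ _ _ _ _ _ _ k nu);
        eauto using fvs_in_step, rt_step; lia.
    + destruct (bounded_step _ _ _ Hnu Ha) as (k & -> & Hk).
      apply (pdev_contract_progress _ _ _ _ _ _ _ _ _ _ _ nF k);
        eauto using fvs_in_step, clos_refl_trans_dsubst; lia.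
    + destruct (IH _ Ha) as (a2' & wa & Hpa & Hprog).
      exists (subst 0 (dsubst D s u) a2'), (S (nF + nu + wa)); split.
      * apply pdev_contract; auto.
      * apply (progress_compat (subst 0 (dsubst D s u)) _ w _ wa); auto; [|lia].
        intros x y Hxy; rewrite !subst0_as_inst; apply step_inst, Hxy.
Qed.

Lemma pdev_sn I t t' w : pdev I t t' w -> sn t' -> sn t.
Proof.
  intros H Hsn; apply sn_clos_trans in Hsn; revert I t w H.
  induction Hsn as [t' _ IHt']; intros I t w.
  revert t; induction w as [w IHw] using (well_founded_induction lt_wf); intros t H.
  constructor; intros t2 Hs.
  destruct (pdev_step _ _ _ _ _ H Hs) as (t2' & w2 & H2 & [Hplus | [<- Hw]]); eauto.
Qed.

Lemma sn_lam t : sn t -> sn (Lam t).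
Proof.
  induction 1 as [t _ IH]; constructor; intros v Hv; inversion Hv; subst; auto.
Qed.

Lemma sn_app_neutral n u r : neutral n -> sn n -> sn u -> sn r -> sn (App n u r).
Proof.
  intros Hn Hsn; revert u r Hn; induction Hsn as [n _ IHn]; intros u r Hn Hsu.
  revert r; induction Hsu as [u Hu IHu]; intros r Hsr.
  induction Hsr as [r Hr IHr]; constructor; intros v Hv;
    inversion Hv as [| | ? n' ? ? Hn' | ? ? u' ? Hu' | ? ? ? r' Hr']; subst.
  - exfalso; eapply neutral_not_answer; eauto.
  - apply IHn; eauto using neutral_step; constructor; auto.
  - apply IHu; auto; constructor; auto.
  - apply IHr; auto.
Qed.

Lemma pdev_weak_head W I D s u r nF nu :
  weak_head W -> (forall n, I n = true) -> neutral_lctx D ->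
  bounded nF (lplug D (Lam s)) -> bounded nu u ->
  exists w, pdev I (wplug W (App (lplug D (Lam s)) u r)) (wplug W (subst 0 (dsubst D s u) r)) w.
Proof.
  intros HW; revert I; induction HW as [|W u' r' _ IH|n u' W Hn _ IH];
    intros I HI HD HF Hu; simpl.
  - exists (S (nF + nu + 0)); apply pdev_contract; auto using fvs_in_all, pdev_refl.
  - destruct (IH I) as [w Hw]; auto.
    eexists; apply (pdev_app I false); eauto using pdev_refl; discriminate.
  - destruct (IH (scons true I)) as [w Hw]; auto; [intros [|k]; simpl; auto|].
    eexists; apply (pdev_app I true); eauto using pdev_refl, neutral_neutral_in.
Qed.

Lemma ISN_sn t : ISN t -> sn t.
Proof.
  induction 1 as [x | t _ IH | n u r Hn _ IHn _ IHu _ IHr _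
                 | W D s u r HW HD _ IHred _ IHopen _ IHu].
  - constructor; intros v Hv; inversion Hv.
  - apply sn_lam, IH.
  - apply sn_app_neutral; auto.
  - destruct (sn_bounded _ (sn_dopen _ _ HD IHopen)) as [nF HnF].
    destruct (sn_bounded _ IHu) as [nu Hnu].
    destruct (pdev_weak_head W (fun _ => true) D s u r nF nu) as [w Hw]; auto.
    eapply pdev_sn; eauto.
Qed.

(** * Strongly normalising terms are in ISN *)

Fixpoint size (t : term) : nat :=
  match t with
  | Var _ => 1
  | Lam t => S (size t)
  | App t u v => S (size t + size u + size v)
  end.

Fixpoint lsize (D : lctx) : nat :=
  match D with LHole => 0 | LApp t u D' => S (size t + size u + lsize D') end.

Lemma size_ren r t : size (ren r t) = size t.
Proof. revert r; induction t; intros r; simpl; auto. Qed.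

Lemma lsize_lren r D : lsize (lren r D) = lsize D.
Proof. revert r; induction D; intros r; simpl; rewrite ?size_ren, ?IHD; auto. Qed.

Lemma size_lplug D t : size (lplug D t) = lsize D + size t.
Proof. induction D; simpl; rewrite ?IHD; lia. Qed.

Lemma size_dopen D s : size (dopen D s) = lsize D + size s.
Proof. rewrite dopen_as_lplug, size_lplug, lsize_lren, size_ren; reflexivity. Qed.

Lemma size_wplug W t : size t <= size (wplug W t).
Proof. induction W; simpl; lia. Qed.

Lemma answer_lplug t : answer t -> exists D s, neutral_lctx D /\ t = lplug D (Lam s).
Proof.
  induction 1 as [s | n u a Hn _ (D & s & HD & ->)].
  - exists LHole, s; split; auto using neutral_lctx.
  - exists (LApp n u D), s; split; auto using neutral_lctx.
Qed.

Lemma neutral_answer_or_redex t : neutral t \/ answer t \/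
  exists W D s u r, weak_head W /\ neutral_lctx D /\ t = wplug W (App (lplug D (Lam s)) u r).
Proof.
  induction t as [x | t _ | t1 [N1 | [A1 | (W & D & s & u & r & HW & HD & ->)]] t2 _ t3 IH3].
  - left; constructor.
  - right; left; constructor.
  - destruct IH3 as [N3 | [A3 | (W & D & s & u & r & HW & HD & ->)]].
    + left; constructor; auto.
    + right; left; constructor; auto.
    + right; right; exists (WRight t1 t2 W), D, s, u, r; repeat split; auto using weak_head.
  - destruct (answer_lplug _ A1) as (D & s & HD & ->).
    right; right; exists WHole, D, s, t2, t3; repeat split; auto using weak_head.
  - right; right; exists (WLeft W t2 t3), D, s, u, r; repeat split; auto using weak_head.
Qed.

Lemma bounded_ISN n t : bounded n t -> ISN t.
Proof.
  revert t; induction n as [n IHn] using (well_founded_induction lt_wf).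
  intros t; induction t as [t IHt] using (well_founded_induction (well_founded_ltof _ size)).
  unfold ltof in IHt; intros Ht.
  assert (Happ : forall a b c, t = App a b c -> ISN a /\ ISN b /\ ISN c).
  { intros a b c ->; simpl in IHt; repeat split; apply IHt; try lia;
      [apply (bounded_compat (fun x => App x b c)) | apply (bounded_compat (fun x => App a x c))
      | apply (bounded_compat (fun x => App a b x))]; auto using step. }
  destruct (neutral_answer_or_redex t) as [Hn | [Ha | (W & D & s & u & r & HW & HD & ->)]].
  - destruct Hn as [x | a b c Ha Hc]; [apply snvar|].
    destruct (Happ a b c) as (? & ? & ?); auto using ISN, neutral.
  - destruct Ha as [a | a b c Ha Hc].
    + apply snabs, IHt; simpl; [lia|].
      apply (bounded_compat Lam); auto using step.
    + destruct (Happ a b c) as (? & ? & ?); auto using ISN.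
  - assert (Hsize := size_wplug W (App (lplug D (Lam s)) u r)).
    simpl in Hsize; rewrite size_lplug in Hsize; simpl in Hsize.
    assert (Hredex := bounded_compat (wplug W) (step_wplug W) _ _ Ht).
    apply snbeta; auto.
    + destruct (bounded_step _ _ _ Ht (step_wplug W _ _ (step_dbeta D s u r))) as (m & -> & Hm).
      apply (IHn m); auto.
    + apply IHt; [rewrite size_dopen; lia|].
      apply bounded_dopen; auto.
      apply (bounded_compat (fun x => App x u r)); auto using step.
    + apply IHt; [lia|].
      apply (bounded_compat (fun x => App (lplug D (Lam s)) x r)); auto using step.
Qed.

Theorem mainTheorem6 : forall t : term, SN t <-> ISN t.
Proof.
  intros t; split.
  - intros H; destruct (sn_bounded _ (SN_sn _ H)) as [n Hn]; apply (bounded_ISN n), Hn.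
  - intros H; apply sn_SN, ISN_sn, H.
Qed.
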